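(* Let $m\ge2$, $Q=T_{(2^m)}$ and $K=K_Q(2)$. Let $M=\mathrm{diag}(a,a^{-1})X^b$ and $M'=\mathrm{diag}(a',a'^{-1})X^{b'}$ be elements of $K$ (with $\mathrm{diag}(a,a^{-1}),\mathrm{diag}(a',a'^{-1})\in Q$, $b,b'\in\{0,1\}$) such that $[M,M']=\pm\mathbbm{1}$. Then: (1) if $b=b'=0$, then $M,M'\in Q$ and $[M,M']=\mathbbm{1}$; (2) if $b=1$, $b'=0$, then $M'\in T_{(4)}$, and if moreover $[M,M']=\mathbbm{1}$ then $M'\in Z(K)$; (3) if $b=0$, $b'=1$, then $M\in T_{(4)}$, and if moreover $[M,M']=\mathbbm{1}$ then $M\in Z(K)$; (4) if $b=b'=1$, then $M=S_\chi M'$ for some $S_\chi\in T_{(4)}$, and if moreover $[M,M']=\mathbbm{1}$ then $M=\pm M'$.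
   Context: Let $\{|0\rangle,|1\rangle\}$ be the computational basis of $\mathbb{C}^2$ and $X|q\rangle=|q+1\bmod 2\rangle$. For $\xi:\mathbb{Z}_2\to U(1)$ let $S_\xi=\mathrm{diag}(\xi(0),\xi(1))$; $T=\{S_\xi:\xi(0)\xi(1)=1\}$ and $T_{(2^k)}=\{S\in T:S^{2^k}=\mathbbm{1}\}$. $K_Q(2)$ is the subgroup of $SU(2)$ generated by all $S_\xi X^b$ with $S_\xi\in Q$, $b\in\mathbb{Z}_2$. $Z(K)$ is the center of $K$. The commutator is $[A,B]=ABA^{-1}B^{-1}$. *)

(* 2x2 complex matrices over algC (algebraic complex numbers).
   All elements of the groups considered are roots of unity, hence algebraic. *)
From HB Require Import structures.
From mathcomp Require Import all_boot all_order all_algebra all_field.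
Set Implicit Arguments. Unset Strict Implicit. Unset Printing Implicit Defensive.
Import Order.TTheory GRing.Theory Num.Theory.
Local Open Scope ring_scope.

Notation mat2 := 'M[algC]_2.

Definition Xm : mat2 := \matrix_(i < 2, j < 2) (i != j)%:R.

Definition Sdiag (x y : algC) : mat2 :=
  \matrix_(i < 2, j < 2) (if i == j then (if i == ord0 then x else y) else 0).

Definition diaga (a : algC) : mat2 := Sdiag a a^-1.

Definition inT (S : mat2) : Prop :=
  exists x y : algC, `|x| = 1 /\ `|y| = 1 /\ x * y = 1 /\ S = Sdiag x y.

Definition inTk (k : nat) (S : mat2) : Prop := inT S /\ S ^+ (2 ^ k) = 1.

Inductive inK (Q : mat2 -> Prop) : mat2 -> Prop :=
  | K_gen S (b : bool) : Q S -> inK Q (S * Xm ^+ b)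
  | K_one : inK Q 1
  | K_mul A B : inK Q A -> inK Q B -> inK Q (A * B)
  | K_inv A : inK Q A -> inK Q (invmx A).

Definition inZK (Q : mat2 -> Prop) (M : mat2) : Prop :=
  inK Q M /\ forall N, inK Q N -> M * N = N * M.

Definition comm (A B : mat2) : mat2 := A * B * invmx A * invmx B.

From HB Require Import structures.
From mathcomp Require Import all_boot all_order all_algebra all_field.
From mathcomp Require Import ring.
Import Order.TTheory GRing.Theory Num.Theory.
Local Open Scope ring_scope.

(* Every element diag(a, 1/a) X^b is a monomial matrix, and conjugating by X
   inverts the diagonal part.  Hence the commutator of diag(a, 1/a) X^b and
   diag(a', 1/a') X^b' is the diagonal matrix diag(c, 1/c) with
   c = a^(2b') a'^(-2b).  It is +-1 exactly when c^2 = 1, which bounds the order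
   of a, a' or a/a' by 4, and it is 1 exactly when c = 1, which forces the
   relevant element to be the central scalar +-1. *)

Ltac mx2_entries :=
  apply/matrixP=> -[[|[|//]] ?] -[[|[|//]] ?];
  rewrite -?mulmxE !mxE ?big_ord_recr ?big_ord0 /= ?mxE /=
    ?mulr0 ?mul0r ?addr0 ?add0r ?mulr1 ?mul1r ?oppr0 //.

Lemma Sdiag_mul p q r s : Sdiag p q * Sdiag r s = Sdiag (p * r) (q * s).
Proof. by mx2_entries. Qed.

Lemma Xm_Sdiag p q : Xm * Sdiag p q = Sdiag q p * Xm.
Proof. by mx2_entries. Qed.

Lemma Xm_mulXm : Xm * Xm = 1.
Proof. by mx2_entries. Qed.

Lemma Sdiag1 : Sdiag 1 1 = 1.
Proof. by mx2_entries. Qed.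

Lemma SdiagN p q : Sdiag (- p) (- q) = - Sdiag p q.
Proof. by mx2_entries. Qed.

Lemma Sdiag_injl p q r s : Sdiag p q = Sdiag r s -> p = r.
Proof. by move/(congr1 (fun A : mat2 => A ord0 ord0)); rewrite !mxE. Qed.

Lemma diaga_inj : injective diaga.
Proof. by move=> x y /Sdiag_injl. Qed.

Lemma diaga1 : diaga 1 = 1.
Proof. by rewrite /diaga invr1 Sdiag1. Qed.

Lemma diagaN x : diaga (- x) = - diaga x.
Proof. by rewrite /diaga invrN SdiagN. Qed.

Lemma diaga_mul x y : diaga x * diaga y = diaga (x * y).
Proof. by rewrite /diaga Sdiag_mul invfM. Qed.

Lemma diagaX x n : diaga x ^+ n = diaga (x ^+ n).
Proof. by elim: n => [|n IHn]; rewrite ?diaga1 // !exprS IHn diaga_mul. Qed.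

Lemma Xm_diaga x : Xm * diaga x = diaga x^-1 * Xm.
Proof. by rewrite /diaga Xm_Sdiag invrK. Qed.

Lemma diaga_eq1 x : diaga x = 1 <-> x = 1.
Proof. by split=> [|->]; [rewrite -diaga1 => /diaga_inj | exact: diaga1]. Qed.

Lemma diaga_pm1 x : diaga x = 1 \/ diaga x = -1 <-> x ^+ 2 = 1.
Proof.
rewrite -diaga1 -diagaN; split.
  by case=> /diaga_inj ->; rewrite ?sqrrN expr1n.
by move/eqP; rewrite sqrf_eq1 => /orP[] /eqP ->; [left | right].
Qed.

Lemma mul_diaga_Xm x y (b c : bool) :
  diaga x * Xm ^+ b * (diaga y * Xm ^+ c) =
  diaga (x * (if b then y^-1 else y)) * Xm ^+ (b (+) c).
Proof.
case: b; case: c; rewrite /= ?expr0 ?expr1 ?mulr1 ?diaga_mul //.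
- by rewrite -mulrA (mulrA Xm) Xm_diaga -mulrA Xm_mulXm mulr1 diaga_mul.
- by rewrite -mulrA Xm_diaga mulrA diaga_mul.
- by rewrite mulrA diaga_mul.
Qed.

Lemma invmx_mulr1 (A B : mat2) : A * B = 1 -> invmx A = B.
Proof.
move=> AB1; have [uA _] := mulmx1_unit (AB1 : A *m B = 1%:M).
by rewrite -[B](mulKr uA) AB1 mulr1.
Qed.

Lemma invmx_diaga_Xm x (b : bool) : x != 0 ->
  invmx (diaga x * Xm ^+ b) = diaga (if b then x else x^-1) * Xm ^+ b.
Proof.
move=> x0; apply: invmx_mulr1.
by rewrite mul_diaga_Xm addbb expr0 mulr1; case: b; rewrite ?invrK divff ?diaga1.
Qed.

Lemma comm_diaga_Xm x y (b c : bool) : x != 0 -> y != 0 ->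
  comm (diaga x * Xm ^+ b) (diaga y * Xm ^+ c) =
  diaga ((if c then x ^+ 2 else 1) * (if b then (y ^+ 2)^-1 else 1)).
Proof.
move=> x0 y0; rewrite /comm !invmx_diaga_Xm // !mul_diaga_Xm.
have -> : b (+) c (+) b (+) c = false by case: b; case: c.
by rewrite expr0 mulr1; congr diaga; case: b; case: c => /=; field; rewrite ?x0 ?y0.
Qed.

Lemma norm1_neq0 {x : algC} : `|x| = 1 -> x != 0.
Proof. by move=> x1; rewrite -normr_eq0 x1 oner_eq0. Qed.

Lemma inTk_diagaP k x : inTk k (diaga x) <-> `|x| = 1 /\ x ^+ (2 ^ k) = 1.
Proof.
rewrite /inTk diagaX diaga_eq1; split=> -[Tx ->]; split=> //.
  by case: Tx => [y [z [y1 [_ [_ /Sdiag_injl ->]]]]].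
by exists x, x^-1; rewrite normfV Tx invr1 divff ?norm1_neq0.
Qed.

Lemma inTk2_diaga x : `|x| = 1 -> (x ^+ 2) ^+ 2 = 1 -> inTk 2 (diaga x).
Proof. by move=> x1 x4; apply/inTk_diagaP; split=> //; rewrite -x4 -exprM. Qed.

Lemma inK_diaga (Q : mat2 -> Prop) x : Q (diaga x) -> inK Q (diaga x).
Proof. by move=> Qx; rewrite -[diaga x]mulr1 -(expr0 Xm); apply: (K_gen false). Qed.

Lemma inZK_diaga (Q : mat2 -> Prop) x :
  Q (diaga x) -> x ^+ 2 = 1 -> inZK Q (diaga x).
Proof.
move=> Qx /diaga_pm1 x_pm1; split; first exact: inK_diaga.
by move=> N _; case: x_pm1 => ->; rewrite ?mul1r ?mulr1 ?mulN1r ?mulrN1.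
Qed.

Theorem lemma9 (m : nat) (hm : (2 <= m)%N) (a a' : algC) (b b' : bool)
  (ha : inTk m (diaga a)) (ha' : inTk m (diaga a'))
  (hc : comm (diaga a * Xm ^+ b) (diaga a' * Xm ^+ b') = 1 \/
        comm (diaga a * Xm ^+ b) (diaga a' * Xm ^+ b') = - 1) :
  let M := diaga a * Xm ^+ b in
  let M' := diaga a' * Xm ^+ b' in
  let Q := inTk m in
  (~~ b -> ~~ b' -> Q M /\ Q M' /\ comm M M' = 1) /\
  (b -> ~~ b' -> inTk 2 M' /\ (comm M M' = 1 -> inZK Q M')) /\
  (~~ b -> b' -> inTk 2 M /\ (comm M M' = 1 -> inZK Q M)) /\
  (b -> b' -> (exists S, inTk 2 S /\ M = S * M') /\
              (comm M M' = 1 -> M = M' \/ M = - M')).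
Proof.
have [a1 _] := proj1 (inTk_diagaP m a) ha.
have [a'1 _] := proj1 (inTk_diagaP m a') ha'.
have a0 := norm1_neq0 a1; have a'0 := norm1_neq0 a'1.
move=> M M' Q; rewrite {}/M {}/M' {}/Q comm_diaga_Xm // diaga_eq1.
rewrite comm_diaga_Xm // diaga_pm1 in hc.
case: b b' hc => [] [] /= hc; (split; [|split; [|split]]); move=> // _ _;
  rewrite ?expr0 ?expr1 ?mulr1 ?mul1r in hc *.
- rewrite -expr_div_n in hc *.
  have a_div : a = a / a' * a' by rewrite divfK.
  split.
    exists (diaga (a / a')); rewrite mulrA diaga_mul -a_div; split=> //.
    by apply: inTk2_diaga; rewrite // normrM normfV a1 a'1 invr1 mulr1.
  move/eqP; rewrite sqrf_eq1 => /orP[] /eqP a_a'; rewrite a_div a_a'.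
    by left; rewrite mul1r.
  by right; rewrite mulN1r diagaN mulNr.
- move/eqP: hc; rewrite exprVn invr_eq1 => /eqP hc.
  split; first exact: inTk2_diaga.
  by move/eqP; rewrite invr_eq1 => /eqP; apply: inZK_diaga.
- by split=> [|a2]; [apply: inTk2_diaga | apply: inZK_diaga].
- by [].
Qed.
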